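(* Let $(V,\langle\cdot\,,\cdot\rangle_V)$ be an admissible integral $\mathrm{Cl}_{r,s}$-module and $(U,(\cdot\,,\cdot)_U)$ an admissible integral $\mathrm{Cl}_{8,0}$-module with positive definite inner product $(\cdot\,,\cdot)_U$, such that the representations $J_{y_j}\in\mathrm{End}(U)$ permute the integral basis of $U$ up to sign for all orthonormal generators $y_1,\ldots,y_8$ of $\mathrm{Cl}_{8,0}$. Then $V\otimes U$ with the scalar product $\langle v\otimes u,v'\otimes u'\rangle=\langle v,v'\rangle_V(u,u')_U$ is (carries the structure of) an admissible integral $\mathrm{Cl}_{r+8,s}$-module.
   Context: A scalar product is a real symmetric non-degenerate bilinear form. $\mathrm{Cl}_{p,q}$ is the real Clifford algebra generated by $\mathbb R^{p,q}$ ($\mathbb R^{p+q}$ with quadratic form $x_1^2+\dots+x_p^2-x_{p+1}^2-\dots-x_{p+q}^2$) with relation $z^2=-\langle z,z\rangle\cdot1$; orthonormal generators $z_k$ satisfy $\langle z_k,z_l\rangle=0$ ($k\ne l$), $\langle z_k,z_k\rangle=\pm1$. A $\mathrm{Cl}_{p,q}$-module $V$ with representation $J$ is admissible if it carries a scalar product with $\langle J_zu,v\rangle_V=-\langle u,J_zv\rangle_V$ for all $z,u,v$; it is an admissible integral module if it has an integral basis, i.e. a basis $\{v_\alpha\}$ with $\langle v_\alpha,v_\beta\rangle_V=0$ ($\alpha\ne\beta$), $\langle v_\alpha,v_\alpha\rangle_V=\pm1$, and $\langle J_{z_k}v_\alpha,v_\beta\rangle_V\in\{1,-1,0\}$ for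 all orthonormal generators $z_k$ and all $\alpha,\beta$. An operator permutes a basis up to sign if it sends each basis vector to $\pm$ some basis vector. *)

From HB Require Import structures.
From mathcomp Require Import all_boot all_order all_algebra.
From mathcomp Require Import reals.
Set Implicit Arguments. Unset Strict Implicit. Unset Printing Implicit Defensive.
Import Order.TTheory GRing.Theory Num.Theory.
Local Open Scope ring_scope.

(* Vectors of a module of dimension n are row vectors 'rV_n; an endomorphism
   is a matrix A acting by u |-> u *m A. *)

Section Defs.
Variable R : realType.

Definition qform (p q : nat) (z : 'rV[R]_(p + q)) : R :=
  \sum_(k < p + q) (if (val k < p)%N then 1 else -1) * z 0 k ^+ 2.

Definition bform (n : nat) (G : 'M[R]_n) (u v : 'rV[R]_n) : R :=
  (u *m G *m v^T) 0 0.

Definition scalar_product (n : nat) (G : 'M[R]_n) : Prop :=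
  G^T = G /\ G \in unitmx.

Definition pos_def (n : nat) (G : 'M[R]_n) : Prop :=
  forall u : 'rV[R]_n, u != 0 -> 0 < bform G u u.

Definition cliff_op (p q n : nat) (Jg : 'I_(p + q) -> 'M[R]_n)
  (z : 'rV[R]_(p + q)) : 'M[R]_n := \sum_(k < p + q) z 0 k *: Jg k.

Definition cl_rep (p q n : nat) (Jg : 'I_(p + q) -> 'M[R]_n) : Prop :=
  forall z, cliff_op Jg z *m cliff_op Jg z = - (qform z)%:M.

Definition admissible (p q n : nat) (Jg : 'I_(p + q) -> 'M[R]_n)
  (G : 'M[R]_n) : Prop :=
  [/\ cl_rep Jg, scalar_product G &
      forall z (u v : 'rV[R]_n),
        bform G (u *m cliff_op Jg z) v = - bform G u (v *m cliff_op Jg z)].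

Definition is_basis (n : nat) (b : 'I_n -> 'rV[R]_n) : Prop :=
  (\matrix_(i < n) b i) \in unitmx.

Definition integral_basis (p q n : nat) (Jg : 'I_(p + q) -> 'M[R]_n)
  (G : 'M[R]_n) (b : 'I_n -> 'rV[R]_n) : Prop :=
  [/\ is_basis b,
      forall a c, a != c -> bform G (b a) (b c) = 0,
      forall a, bform G (b a) (b a) = 1 \/ bform G (b a) (b a) = -1 &
      forall (k : 'I_(p + q)) a c,
        let x := bform G (b a *m Jg k) (b c) in x = 1 \/ x = -1 \/ x = 0].

Definition admissible_integral (p q n : nat) (Jg : 'I_(p + q) -> 'M[R]_n)
  (G : 'M[R]_n) : Prop :=
  admissible Jg G /\ exists b, integral_basis Jg G b.

Definition perm_up_to_sign (n : nat) (A : 'M[R]_n) (b : 'I_n -> 'rV[R]_n) :=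
  forall a, exists c, b a *m A = b c \/ b a *m A = - b c.

(* V (x) U identified with R^(n*m); pure tensor v (x) u *)
Definition tens (n m : nat) (v : 'rV[R]_n) (u : 'rV[R]_m) : 'rV[R]_(n * m) :=
  mxvec (v^T *m u).

End Defs.

(* Let W = J_{y_1} ... J_{y_8} be the volume element of the Cl_{8,0}-module U.
   Since 8 is divisible by 4, W^2 = 1, W anticommutes with every J_{y_j} and is
   symmetric for (.,.)_U; being a product of signed permutations of the integral
   basis of U, it is itself one. Hence the operators J_{z_k} (x) W and
   1 (x) J_{y_j} satisfy the Clifford relations of Cl_{r+8,s} and are skew for the
   product form. Gram entries of tensor products of basis vectors factor into
   products of entries in {1, -1, 0}, so the tensor product of the integral bases
   is integral. *)

From HB Require Import structures.
From mathcomp Require Import all_boot all_order all_algebra.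
From mathcomp Require Import reals mxtens ring.
Import Order.TTheory GRing.Theory Num.Theory.
Local Open Scope ring_scope.
Set Implicit Arguments. Unset Strict Implicit. Unset Printing Implicit Defensive.

Lemma index_allpairs_pair (T1 T2 : eqType) (s : seq T1) (t : seq T2) x y :
  x \in s -> y \in t ->
  index (x, y) [seq (a, b) | a <- s, b <- t] = (index x s * size t + index y t)%N.
Proof.
move=> + t_y; elim: s => // a s IHs; rewrite in_cons allpairs_cons index_cat /=.
have [<- _ | neq_xa /= s_x] := eqVneq x a.
  by rewrite map_f //= (index_map (f := pair x)) // => ? ? [].
rewrite ifF ?size_map ?IHs 1?addnA //.
by apply/mapP => -[? _ [/eqP]]; rewrite (negbTE neq_xa).
Qed.

(* [mxvec] and [tensmx] use the same row-major layout of 'I_m * 'I_n. *)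
Lemma mxvec_index_tens m n (i : 'I_m) (j : 'I_n) :
  mxvec_index i j = mxtens_index (i, j).
Proof.
have enum_pair : enum {: 'I_m * 'I_n} = [seq (a, b) | a <- enum 'I_m, b <- enum 'I_n].
  by rewrite enumT unlock.
apply: val_inj; rewrite /= /enum_rank enum_rank_in.unlock insubdK.
  by rewrite enum_pair index_allpairs_pair ?mem_enum // !index_enum_ord size_enum_ord.
by rewrite unfold_in /= cardE index_mem mem_enum.
Qed.

Lemma eq_mxtens_index m n (i i' : 'I_m) (j j' : 'I_n) :
  (mxtens_index (i, j) == mxtens_index (i', j')) = (i == i') && (j == j').
Proof. by rewrite (can_eq (@mxtens_indexK m n)) xpair_eqE. Qed.

Section TensorProduct.
Variable R : comPzRingType.
Variables n m : nat.
Implicit Types (A : 'M[R]_n) (B : 'M[R]_m).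

Lemma tensmxDl A A' B : (A + A') *t B = A *t B + A' *t B.
Proof. by apply/matrixP => k l; rewrite !mxE mulrDl. Qed.

Lemma tensmxDr A B B' : A *t (B + B') = A *t B + A *t B'.
Proof. by apply/matrixP => k l; rewrite !mxE mulrDr. Qed.

Lemma tensmxNl A B : (- A) *t B = - (A *t B).
Proof. by apply/matrixP => k l; rewrite !mxE mulNr. Qed.

Lemma tensmxNr A B : A *t (- B) = - (A *t B).
Proof. by apply/matrixP => k l; rewrite !mxE mulrN. Qed.

Lemma tensmx_scalar (a b : R) :
  (a%:M : 'M_n) *t (b%:M : 'M_m) = (a * b)%:M.
Proof.
apply/matrixP => k l; case: (mxtens_indexP k) => i j; case: (mxtens_indexP l) => i' j'.
rewrite tensmxE !mxE eq_mxtens_index.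
by case: eqP; case: eqP; rewrite ?mulr0n ?mul0r ?mulr0 ?mulr1n.
Qed.

End TensorProduct.

Lemma unitmx_tens (R : comUnitRingType) n m (A : 'M[R]_n) (B : 'M[R]_m) :
  A \in unitmx -> B \in unitmx -> A *t B \in unitmx.
Proof.
move=> uA uB; suff /mulmx1_unit[] : A *t B *m (invmx A *t invmx B) = 1%:M by [].
by rewrite tensmx_mul !mulmxV // tensmx_scalar mulr1.
Qed.

Section Forms.
Variables (R : realType) (n : nat).
Implicit Types (G A : 'M[R]_n).

Lemma bform_delta (M : 'M[R]_n) i j : bform M (delta_mx 0 i) (delta_mx 0 j) = M i j.
Proof. by rewrite /bform trmx_delta -rowE -colE !mxE. Qed.

Lemma bformNl G u v : bform G (- u) v = - bform G u v.
Proof. by rewrite /bform !mulNmx mxE. Qed.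

Definition gram_skew G A := A *m G = - (G *m A^T).
Definition gram_sym G A := A *m G = G *m A^T.

Lemma bform_skewP G A :
  (forall u v, bform G (u *m A) v = - bform G u (v *m A)) <-> gram_skew G A.
Proof.
split=> [skew | skewA u v].
  apply/matrixP => i j; rewrite -[LHS]bform_delta -[RHS]bform_delta /bform.
  have := skew (delta_mx 0 i) (delta_mx 0 j); rewrite /bform trmx_mul !mulmxA => ->.
  by rewrite mulmxN mulNmx !mulmxA [in RHS]mxE.
by rewrite /bform -(mulmxA u) skewA trmx_mul mulmxN mulNmx !mulmxA mxE.
Qed.

End Forms.

Section TensorForms.
Variable R : realType.
Variables n m : nat.

Lemma tensE (v : 'rV[R]_n) (u : 'rV[R]_m) i j :
  tens v u 0 (mxtens_index (i, j)) = v 0 i * u 0 j.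
Proof. by rewrite -mxvec_index_tens mxvecE !mxE big_ord1 !mxE. Qed.

Lemma tens_tensmx (v : 'rV[R]_n) (u : 'rV[R]_m) : tens v u = v *t u.
Proof.
apply/rowP => k; case: (mxtens_indexP k) => i j; rewrite tensE mxE mxtens_indexK.
by case: (mxtens_unindex _) => a b; rewrite [a]ord1 [b]ord1.
Qed.

Lemma tens_mulmx (v : 'rV[R]_n) (u : 'rV[R]_m) (A : 'M[R]_n) (B : 'M[R]_m) :
  tens v u *m (A *t B) = tens (v *m A) (u *m B).
Proof. by rewrite !tens_tensmx; exact: (tensmx_mul v u A B). Qed.

Lemma tens_delta (i : 'I_n) (j : 'I_m) :
  tens (delta_mx 0 i : 'rV[R]_n) (delta_mx 0 j) = delta_mx 0 (mxtens_index (i, j)).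
Proof. by rewrite /tens trmx_delta mul_delta_mx mxvec_delta mxvec_index_tens. Qed.

Lemma bform_tens (G : 'M[R]_n) (H : 'M[R]_m) v v' u u' :
  bform (G *t H) (tens v u) (tens v' u') = bform G v v' * bform H u u'.
Proof.
rewrite /bform tens_mulmx !tens_tensmx.
have -> : (v *m G) *t (u *m H) *m (v' *t u')^T = (v *m G *m v'^T) *t (u *m H *m u'^T).
  by rewrite trmx_tens tensmx_mul.
by rewrite mxE; case: (mxtens_unindex _) => i j; rewrite [i]ord1 [j]ord1.
Qed.

Lemma gram_tens (G : 'M[R]_n) (H : 'M[R]_m) (G' : 'M[R]_(n * m)) :
  (forall v v' u u', bform G' (tens v u) (tens v' u') = bform G v v' * bform H u u') ->
  G' = G *t H.
Proof.
move=> hG'; apply/matrixP => k l.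
case: (mxtens_indexP k) => i j; case: (mxtens_indexP l) => i' j'.
by rewrite -!bform_delta -!tens_delta hG' bform_tens.
Qed.

Lemma scalar_product_tens (G : 'M[R]_n) (H : 'M[R]_m) :
  scalar_product G -> scalar_product H -> scalar_product (G *t H).
Proof.
by case=> symG uG [symH uH]; split; [rewrite trmx_tens symG symH | apply: unitmx_tens].
Qed.

Lemma gram_skew_tensl (G X : 'M[R]_n) (H Y : 'M[R]_m) :
  gram_skew G X -> gram_sym H Y -> gram_skew (G *t H) (X *t Y).
Proof.
by move=> skewX symY; rewrite /gram_skew trmx_tens !tensmx_mul skewX symY tensmxNl.
Qed.

Lemma gram_skew_tensr (G X : 'M[R]_n) (H Y : 'M[R]_m) :
  gram_sym G X -> gram_skew H Y -> gram_skew (G *t H) (X *t Y).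
Proof.
by move=> symX skewY; rewrite /gram_skew trmx_tens !tensmx_mul symX skewY tensmxNr.
Qed.

End TensorForms.

Section Clifford.
Variable R : realType.

Definition qsign p q (k : 'I_(p + q)) : R := if (k < p)%N then 1 else -1.

Definition qpolar p q (z w : 'rV[R]_(p + q)) : R := \sum_k qsign k * z 0 k * w 0 k.

Definition clifford_rel (I : eqType) n (J : I -> 'M[R]_n) (sgn : I -> R) :=
  forall k l, J k *m J l + J l *m J k = (if k == l then - (2 * sgn k) else 0)%:M.

Lemma qformE p q (z : 'rV[R]_(p + q)) : qform z = qpolar z z.
Proof. by apply: eq_bigr => k _; rewrite mulrA. Qed.

Lemma qformD p q (z w : 'rV[R]_(p + q)) :
  qform (z + w) = qform z + qform w + 2 * qpolar z w.
Proof.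
rewrite !qformE /qpolar mulr_sumr -!big_split; apply: eq_bigr => k _ /=.
by rewrite !mxE mulrDr !mulrDl; ring.
Qed.

Lemma qpolar_delta p q (k l : 'I_(p + q)) :
  qpolar (delta_mx 0 k) (delta_mx 0 l) = if k == l then qsign k else 0.
Proof.
rewrite /qpolar (bigD1 k) //= big1 => [|t /negbTE ntk]; last by rewrite !mxE ntk mulr0 mul0r.
by rewrite !mxE !eqxx eq_sym; case: eqP; rewrite ?mulr1 ?mulr0 addr0.
Qed.

Lemma scalar_mx_half n (X : 'M[R]_n) c : X + X = (2 * c)%:M -> X = c%:M.
Proof.
move=> XX; have -> : X = 2^-1 *: (X + X).
  by rewrite -mulr2n -scaler_nat scalerA mulVf ?scale1r // pnatr_eq0.
by rewrite XX scale_scalar_mx mulrA mulVf ?mul1r // pnatr_eq0.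
Qed.

Section Generators.
Variables p q n : nat.
Variable Jg : 'I_(p + q) -> 'M[R]_n.

Lemma cliff_op_delta k : cliff_op Jg (delta_mx 0 k) = Jg k.
Proof.
rewrite /cliff_op (bigD1 k) //= big1 => [|l /negbTE nlk]; last by rewrite !mxE nlk scale0r.
by rewrite !mxE !eqxx scale1r addr0.
Qed.

Lemma cliff_opD z w : cliff_op Jg (z + w) = cliff_op Jg z + cliff_op Jg w.
Proof. by rewrite /cliff_op -big_split; apply: eq_bigr => k _; rewrite mxE scalerDl. Qed.

Lemma cl_rep_anticomm z w : cl_rep Jg ->
  cliff_op Jg z *m cliff_op Jg w + cliff_op Jg w *m cliff_op Jg z =
  (- (2 * qpolar z w))%:M.
Proof.
move=> rep; have := rep (z + w); rewrite cliff_opD mulmxDl !mulmxDr rep rep qformD.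
rewrite addrA -(addrA (- _%:M)) addrAC => /(canRL (addKr _)) ->.
by apply/matrixP => i j; rewrite !mxE; case: (i == j); rewrite ?mulr1n ?mulr0n; ring.
Qed.

Lemma clifford_rel_anticomm z w : clifford_rel Jg (@qsign p q) ->
  cliff_op Jg z *m cliff_op Jg w + cliff_op Jg w *m cliff_op Jg z =
  (- (2 * qpolar z w))%:M.
Proof.
move=> rel; rewrite /cliff_op !mulmx_suml.
under eq_bigr do rewrite mulmx_sumr.
under [X in _ + X]eq_bigr do rewrite mulmx_sumr.
(* Pair the (k, l) term of the first product with the (l, k) term of the second. *)
rewrite [X in _ + X]exchange_big -big_split /=.
transitivity (\sum_k (- (2 * (qsign k * z 0 k * w 0 k)))%:M : 'M[R]_n); last first.
  by rewrite -(raddf_sum (@scalar_mx _ _)) sumrN /qpolar mulr_sumr.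
apply: eq_bigr => k _; rewrite -big_split /=.
under eq_bigr => l _ do
  rewrite -!scalemxAl -!scalemxAr !scalerA [w 0 l * _]mulrC -scalerDr rel.
rewrite (bigD1 k) //= big1 => [|l /negbTE nlk]; last first.
  by rewrite eq_sym nlk (raddf0 (@scalar_mx _ _)) scaler0.
by rewrite eqxx addr0 scale_scalar_mx; congr (_%:M); ring.
Qed.

Lemma cl_repP : cl_rep Jg <-> clifford_rel Jg (@qsign p q).
Proof.
split=> [rep k l | rel z].
  rewrite -!cliff_op_delta cl_rep_anticomm // qpolar_delta.
  by case: eqP => // _; rewrite mulr0 oppr0.
rewrite -(raddfN (@scalar_mx _ _)); apply: scalar_mx_half.
by rewrite clifford_rel_anticomm // qformE; congr (_%:M); ring.
Qed.

End Generators.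
End Clifford.

Section CliffordRelations.
Variable R : realType.
Variables (I : eqType) (n : nat) (J : I -> 'M[R]_n) (sgn : I -> R).
Hypothesis rel : clifford_rel J sgn.

Lemma clifford_rel_sqr k : J k *m J k = (- sgn k)%:M.
Proof. by apply: scalar_mx_half; rewrite rel eqxx; congr (_%:M); ring. Qed.

Lemma clifford_rel_anti k l : k != l -> J k *m J l = - (J l *m J k).
Proof.
by move=> /negbTE nkl; apply/eqP; rewrite -addr_eq0 rel nkl (raddf0 (@scalar_mx _ _)).
Qed.

Lemma clifford_rel_comp (I' : eqType) (g : I' -> I) (sgn' : I' -> R) :
  injective g -> (forall k, sgn' k = sgn (g k)) -> clifford_rel (J \o g) sgn'.
Proof. by move=> g_inj sgnE k l; rewrite /= rel (inj_eq g_inj) sgnE. Qed.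

End CliffordRelations.

Section CliffordModules.
Variables (R : realType) (n : nat).
Implicit Types (G : 'M[R]_n).

Lemma gram_skew_cliff_op p q (Jg : 'I_(p + q) -> 'M[R]_n) G :
  (forall k, gram_skew G (Jg k)) -> forall z, gram_skew G (cliff_op Jg z).
Proof.
move=> skew z; rewrite /gram_skew /cliff_op mulmx_suml linear_sum mulmx_sumr -sumrN.
by apply: eq_bigr => k _; rewrite -scalemxAl skew linearZ /= -scalemxAr scalerN.
Qed.

Lemma admissibleP p q (Jg : 'I_(p + q) -> 'M[R]_n) G :
  admissible Jg G <->
  [/\ clifford_rel Jg (@qsign R p q), scalar_product G & forall k, gram_skew G (Jg k)].
Proof.
split=> [[/cl_repP rel sp skew] | [/cl_repP rep sp skew]]; split=> //.
  by move=> k; apply/bform_skewP => u v; rewrite -cliff_op_delta skew.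
by move=> z; apply/bform_skewP/gram_skew_cliff_op.
Qed.

End CliffordModules.

Section GeneratorProducts.
Variables (R : comPzRingType) (k m : nat) (e : 'I_k -> 'M[R]_m).
Hypothesis e_sqr : forall i, e i *m e i = - 1%:M.
Hypothesis e_anti : forall i j, i != j -> e i *m e j = - (e j *m e i).

Definition gen_prod (l : seq 'I_k) : 'M[R]_m := foldr (fun i M => e i *m M) 1%:M l.
Arguments gen_prod : simpl never.

Lemma gen_prod_nil : gen_prod [::] = 1%:M. Proof. by []. Qed.

Lemma gen_prod_cons i l : gen_prod (i :: l) = e i *m gen_prod l. Proof. by []. Qed.

Lemma mulmx_gen_prod j l : uniq l ->
  e j *m gen_prod l = (-1) ^+ (size l + (j \in l)) *: (gen_prod l *m e j).
Proof.
elim: l => [|i l IHl] /=; rewrite ?gen_prod_nil ?gen_prod_cons.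
  by rewrite addn0 expr0 scale1r mulmx1 mul1mx.
case/andP=> il ul; rewrite mulmxA in_cons.
have [eji|nji] /= := eqVneq j i; last first.
  by rewrite e_anti // mulNmx -!mulmxA IHl // -scalemxAr -scaleNr addSn exprS mulN1r.
subst i; rewrite e_sqr mulNmx mul1mx IHl // (negbTE il) addn0 -scalemxAl -mulmxA e_sqr.
rewrite mulmxN mulmx1 !scalerN scalerA -exprD addn1 !addSn addnn -signr_odd /=.
by rewrite negbK odd_double scale1r.
Qed.

Lemma gen_prod_mulmx j l : uniq l -> j \notin l ->
  gen_prod l *m e j = (-1) ^+ size l *: (e j *m gen_prod l).
Proof.
move=> ul jl; rewrite mulmx_gen_prod // (negbTE jl) addn0 scalerA.
by rewrite -exprD addnn -signr_odd odd_double expr0 scale1r.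
Qed.

Lemma gen_prod_sqr l : uniq l ->
  gen_prod l *m gen_prod l = ((-1) ^+ 'C((size l).+1, 2))%:M.
Proof.
elim: l => [|i l IHl] /=; rewrite ?gen_prod_nil ?gen_prod_cons.
  by rewrite mulmx1 expr0.
case/andP=> il ul; rewrite -mulmxA [gen_prod l *m _]mulmxA gen_prod_mulmx //.
rewrite -scalemxAl -mulmxA IHl // mul_mx_scalar -!scalemxAr e_sqr scalerA scalerN.
rewrite scale_scalar_mx -(raddfN (@scalar_mx _ _)) [in RHS]binS bin1 exprD; congr (_%:M).
by rewrite mulr1 exprS mulN1r mulrN mulrC.
Qed.

Lemma gram_gen_prod (H : 'M[R]_m) l :
  (forall i, e i *m H = - (H *m (e i)^T)) -> uniq l ->
  gen_prod l *m H = (-1) ^+ 'C((size l).+1, 2) *: (H *m (gen_prod l)^T).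
Proof.
move=> skew; elim: l => [|i l IHl] /=; rewrite ?gen_prod_nil ?gen_prod_cons.
  by rewrite trmx1 mulmx1 mul1mx expr0 scale1r.
case/andP=> il ul; rewrite -mulmxA IHl // -scalemxAr mulmxA skew mulNmx -mulmxA.
rewrite -trmx_mul gen_prod_mulmx // linearZ /= -scalemxAr scalerN scalerA -scaleNr.
by rewrite [in RHS]binS bin1 exprD exprS mulN1r mulrN.
Qed.

End GeneratorProducts.

Section SignedPermutations.
Variables (R : realType) (n : nat) (b : 'I_n -> 'rV[R]_n).

Lemma perm_up_to_sign1 : perm_up_to_sign 1%:M b.
Proof. by move=> a; exists a; left; rewrite mulmx1. Qed.

Lemma perm_up_to_sign_mul A B :
  perm_up_to_sign A b -> perm_up_to_sign B b -> perm_up_to_sign (A *m B) b.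
Proof.
move=> permA permB a; have [c Ac] := permA a; have [d Bd] := permB c.
exists d; rewrite mulmxA.
by case: Ac => ->; rewrite ?mulNmx; case: Bd => ->; rewrite ?opprK; auto.
Qed.

Lemma perm_up_to_sign_gen_prod k (e : 'I_k -> 'M[R]_n) l :
  (forall j, perm_up_to_sign (e j) b) -> perm_up_to_sign (gen_prod e l) b.
Proof.
move=> perm_e; elim: l => [|i l IHl]; first exact: perm_up_to_sign1.
by rewrite gen_prod_cons; apply: perm_up_to_sign_mul.
Qed.

End SignedPermutations.

Lemma cl80_volume (R : realType) m (Ju : 'I_8 -> 'M[R]_m) (H : 'M[R]_m) :
  clifford_rel Ju (fun _ => 1) -> (forall j, gram_skew H (Ju j)) ->
  let W := gen_prod Ju (enum 'I_8) in
  [/\ W *m W = 1%:M, forall j, W *m Ju j + Ju j *m W = 0 & gram_sym H W].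
Proof.
move=> rel skew W.
have sqr i : Ju i *m Ju i = - 1%:M by rewrite (clifford_rel_sqr rel) raddfN.
have anti := clifford_rel_anti rel.
have sign8 : (-1) ^+ 'C(9, 2) = 1 :> R by rewrite -signr_odd.
split.
- by rewrite (gen_prod_sqr sqr anti) ?enum_uniq // size_enum_ord sign8.
- move=> j; rewrite (mulmx_gen_prod sqr anti) ?enum_uniq // size_enum_ord mem_enum.
  by rewrite -signr_odd /= expr1 scaleN1r addrN.
- by rewrite /gram_sym (gram_gen_prod sqr anti) ?enum_uniq // size_enum_ord sign8 scale1r.
Qed.

Lemma sgr_fixP (R : realDomainType) (x : R) : Num.sg x = x <-> x = 1 \/ x = -1 \/ x = 0.
Proof.
split=> [<- | [->|[->|->]]]; rewrite ?sgr1 ?sgrN1 ?sgr0 //.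
by case: sgrP; auto.
Qed.

Section IntegralOperators.
Variables (R : realType) (n : nat) (G : 'M[R]_n) (b : 'I_n -> 'rV[R]_n).

Definition signed_orthonormal :=
  [/\ is_basis b, forall a c, a != c -> bform G (b a) (b c) = 0 &
      forall a, bform G (b a) (b a) = 1 \/ bform G (b a) (b a) = -1].

Definition integral_op (A : 'M[R]_n) :=
  forall a c, Num.sg (bform G (b a *m A) (b c)) = bform G (b a *m A) (b c).

Lemma integral_basisP p q (J : 'I_(p + q) -> 'M[R]_n) :
  integral_basis J G b <-> signed_orthonormal /\ forall k, integral_op (J k).
Proof.
split=> [[basis orth norm intJ] | [[basis orth norm] intJ]].
  by split=> // k a c; apply/sgr_fixP/intJ.
by split=> // k a c; apply/sgr_fixP/intJ.
Qed.

Lemma integral_op1 : signed_orthonormal -> integral_op 1%:M.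
Proof.
case=> _ orth norm a c; rewrite mulmx1; apply/sgr_fixP.
by have [<-|/orth->] := eqVneq a c; [case: (norm a) => ->|]; auto.
Qed.

Lemma integral_op_perm A : integral_op 1%:M -> perm_up_to_sign A b -> integral_op A.
Proof.
move=> int1 permA a c; have [d [->|->]] := permA a; have := int1 d c; rewrite mulmx1 //.
by rewrite bformNl sgrN => ->.
Qed.

End IntegralOperators.

Section TensorBasis.
Variables (R : realType) (n m : nat) (bv : 'I_n -> 'rV[R]_n) (bu : 'I_m -> 'rV[R]_m).

Definition tens_basis (k : 'I_(n * m)) : 'rV[R]_(n * m) :=
  tens (bv (mxtens_unindex k).1) (bu (mxtens_unindex k).2).

Lemma tens_basisE i j : tens_basis (mxtens_index (i, j)) = tens (bv i) (bu j).
Proof. by rewrite /tens_basis mxtens_indexK. Qed.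

Lemma is_basis_tens : is_basis bv -> is_basis bu -> is_basis tens_basis.
Proof.
rewrite /is_basis => uv uu.
suff -> : \matrix_k tens_basis k = (\matrix_i bv i) *t (\matrix_j bu j).
  exact: unitmx_tens.
apply/matrixP => k l; case: (mxtens_indexP k) => i j; case: (mxtens_indexP l) => i' j'.
by rewrite tensmxE !mxE tens_basisE tensE.
Qed.

Lemma bform_tens_basis (G : 'M[R]_n) (H : 'M[R]_m) X Y i j i' j' :
  bform (G *t H) (tens_basis (mxtens_index (i, j)) *m (X *t Y))
    (tens_basis (mxtens_index (i', j'))) =
  bform G (bv i *m X) (bv i') * bform H (bu j *m Y) (bu j').
Proof. by rewrite !tens_basisE tens_mulmx bform_tens. Qed.

Lemma signed_orthonormal_tens (G : 'M[R]_n) (H : 'M[R]_m) :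
  signed_orthonormal G bv -> signed_orthonormal H bu ->
  signed_orthonormal (G *t H) tens_basis.
Proof.
case=> basis_v orth_v norm_v [basis_u orth_u norm_u]; split; first exact: is_basis_tens.
  move=> k l; case: (mxtens_indexP k) => i j; case: (mxtens_indexP l) => i' j'.
  rewrite eq_mxtens_index !tens_basisE bform_tens negb_and.
  by case/orP => [/orth_v->|/orth_u->]; rewrite ?mul0r ?mulr0.
move=> k; case: (mxtens_indexP k) => i j; rewrite tens_basisE bform_tens.
by case: (norm_v i) => ->; case: (norm_u j) => ->; rewrite ?mulr1 ?mulrN1 ?opprK; auto.
Qed.

Lemma integral_op_tens (G : 'M[R]_n) (H : 'M[R]_m) X Y :
  integral_op G bv X -> integral_op H bu Y -> integral_op (G *t H) tens_basis (X *t Y).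
Proof.
move=> intX intY k l; case: (mxtens_indexP k) => i j; case: (mxtens_indexP l) => i' j'.
by rewrite bform_tens_basis sgrM intX intY.
Qed.

End TensorBasis.

Section TensorModule.
Variables (R : realType) (r s p n m : nat).
Variables (Jv : 'I_(r + s) -> 'M[R]_n) (Ju : 'I_p -> 'M[R]_m) (W : 'M[R]_m).

(* The generators of Cl_{r+p,s} are listed as z_1..z_r, y_1..y_p, z_{r+1}..z_{r+s};
   [inl] marks those coming from Cl_{r,s}, [inr] those coming from Cl_{p,0}. *)
Definition gen_split (k : 'I_((r + p) + s)) : 'I_(r + s) + 'I_p :=
  match split k with
  | inl k' => match split k' with inl i => inl (lshift s i) | inr j => inr j end
  | inr i => inl (rshift r i)
  end.

Definition gen_merge (x : 'I_(r + s) + 'I_p) : 'I_((r + p) + s) :=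
  match x with
  | inl i => match split i with
             | inl i1 => lshift s (lshift p i1)
             | inr i2 => rshift (r + p) i2
             end
  | inr j => lshift s (rshift r j)
  end.

Lemma gen_splitK : cancel gen_split gen_merge.
Proof.
move=> k; rewrite /gen_split.
case: split_ordP => [k' ->|i ->]; last by rewrite /= (unsplitK (inr i)).
by case: split_ordP => [i ->|j ->] //=; rewrite (unsplitK (inl i)).
Qed.

Definition sum_sign (x : 'I_(r + s) + 'I_p) : R := if x is inl i then qsign R i else 1.

Lemma qsign_gen_split k : qsign R k = sum_sign (gen_split k).
Proof.
rewrite /gen_split /qsign; case: split_ordP => [k' _|i _] /=.
  by case: split_ordP => [i _|j _] //=; rewrite /qsign /= ltn_ord.
by rewrite /qsign /= ltnNge leq_addr.
Qed.

Definition sum_gen (x : 'I_(r + s) + 'I_p) : 'M[R]_(n * m) :=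
  match x with inl i => Jv i *t W | inr j => 1%:M *t Ju j end.

Definition tens_gen (k : 'I_((r + p) + s)) : 'M[R]_(n * m) := sum_gen (gen_split k).

Hypothesis relV : clifford_rel Jv (@qsign R r s).
Hypothesis relU : clifford_rel Ju (fun _ => 1).
Hypothesis W_sqr : W *m W = 1%:M.
Hypothesis W_anti : forall j, W *m Ju j + Ju j *m W = 0.

Lemma clifford_rel_sum_gen : clifford_rel sum_gen sum_sign.
Proof.
have anti i j : (Jv i *t W) *m (1%:M *t Ju j) + (1%:M *t Ju j) *m (Jv i *t W) = 0.
  by rewrite !tensmx_mul mulmx1 mul1mx -tensmxDr W_anti tensmx0.
case=> [i|j] [i'|j'] /=.
- by rewrite !tensmx_mul W_sqr -tensmxDl relV tensmx_scalar mulr1.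
- by rewrite anti (raddf0 (@scalar_mx _ _)).
- by rewrite addrC anti (raddf0 (@scalar_mx _ _)).
- by rewrite !tensmx_mul mulmx1 -tensmxDr relU tensmx_scalar mul1r.
Qed.

Lemma clifford_rel_tens_gen : clifford_rel tens_gen (@qsign R (r + p) s).
Proof.
exact: (clifford_rel_comp clifford_rel_sum_gen (can_inj gen_splitK) qsign_gen_split).
Qed.

Lemma gram_skew_tens_gen (G : 'M[R]_n) (H : 'M[R]_m) :
  (forall i, gram_skew G (Jv i)) -> (forall j, gram_skew H (Ju j)) -> gram_sym H W ->
  forall k, gram_skew (G *t H) (tens_gen k).
Proof.
move=> skewV skewU symW k; rewrite /tens_gen; case: gen_split => [i|j] /=.
  exact: gram_skew_tensl.
by apply: gram_skew_tensr => //; rewrite /gram_sym trmx1 mulmx1 mul1mx.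
Qed.

Lemma integral_op_tens_gen G H bv bu :
  signed_orthonormal G bv -> signed_orthonormal H bu ->
  (forall i, integral_op G bv (Jv i)) -> (forall j, integral_op H bu (Ju j)) ->
  perm_up_to_sign W bu -> forall k, integral_op (G *t H) (tens_basis bv bu) (tens_gen k).
Proof.
move=> onv onu intV intU permW k; rewrite /tens_gen; case: gen_split => [i|j] /=.
  by apply: integral_op_tens => //; apply: integral_op_perm (integral_op1 onu) permW.
by apply: integral_op_tens => //; apply: integral_op1.
Qed.

End TensorModule.

Theorem theorem7p2 (R : realType) (r s n m : nat)
  (Jv : 'I_(r + s) -> 'M[R]_n) (G : 'M[R]_n)
  (Ju : 'I_(8 + 0) -> 'M[R]_m) (H : 'M[R]_m) :
  admissible_integral Jv G ->
  admissible Ju H ->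
  pos_def H ->
  (exists bu : 'I_m -> 'rV[R]_m,
      integral_basis Ju H bu /\ forall j, perm_up_to_sign (Ju j) bu) ->
  forall G' : 'M[R]_(n * m),
    (forall (v v' : 'rV[R]_n) (u u' : 'rV[R]_m),
        bform G' (tens v u) (tens v' u') = bform G v v' * bform H u u') ->
    exists J' : 'I_((r + 8) + s) -> 'M[R]_(n * m), admissible_integral J' G'.
Proof.
move=> [/admissibleP[relV spG skewV] [bv /integral_basisP[onv intV]]].
move=> /admissibleP[relU spH skewU] _ [bu [/integral_basisP[onu intU] permU]].
move=> G' /gram_tens->.
have relU1 : clifford_rel Ju (fun _ => 1) by move=> k l; rewrite relU /qsign ltn_ord.
pose W := gen_prod Ju (enum 'I_8).
have [W_sqr W_anti W_sym] := cl80_volume relU1 skewU.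
exists (tens_gen Jv Ju W); split.
  apply/admissibleP; split; first exact: clifford_rel_tens_gen.
    exact: scalar_product_tens.
  exact: gram_skew_tens_gen.
exists (tens_basis bv bu); apply/integral_basisP; split.
  exact: signed_orthonormal_tens.
by apply: integral_op_tens_gen => //; apply: perm_up_to_sign_gen_prod.
Qed.
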